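(* Let $\alpha(s)$ be an arc-length parametrized curve in $\mathbb{R}^3$ whose curvature $\kappa(s)$ is nonconstant (and nonvanishing) and satisfies $$5(\kappa')^2=c_2-\frac{2c_1}{\kappa}+\kappa^4$$ for some real constants $c_1,c_2$, and whose torsion $\tau(s)$ is nonconstant and satisfies $$\kappa^{(4)}-15\kappa(\kappa')^2-10\kappa^2\kappa''+\kappa^5-\tau^2\left(\kappa''-2\kappa^3\right)=0.$$ Let $N(s)$ be the principal unit normal of $\alpha$ and let $S$ be the ruled surface in $\mathbb{R}^3$ locally parametrized by $x(s,t)=\alpha(s)+tN(s)$, with the induced metric. Then $\alpha(s)$ is a triharmonic curve in $S$ with nonconstant geodesic curvature $\kappa_g(s)=\kappa(s)$.
   Context: An arc-length parametrized curve $\gamma$ in a Riemannian manifold $M$ with Levi-Civita connection $\nabla$, curvature tensor $R^M(X,Y)=\nabla_X\nabla_Y-\nabla_Y\nabla_X-\nabla_{[X,Y]}$ and $T=\gamma'$ is called triharmonic if $\nabla_T^5T+R^M(\nabla_T^3T,T)T-R^M(\nabla_T^2T,\nabla_TT)T=0$. For a curve in a surface, the geodesic curvature $\kappa_g$ is defined by $\nabla_TT=\kappa_g\,JT$, with $J$ the rotation by $\pi/2$ (the orientation of $S$ being chosen appropriately). The curvature and torsion of a curve in $\mathbb{R}^3$ are those of its Frenet frame $T=\alpha'$, $N=\alpha''/\kappa$, $B=T\times N$. *)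

From Stdlib Require Import Reals.
From Coquelicot Require Import Coquelicot.
Open Scope R_scope.

Record vec3 := mkv { vx : R; vy : R; vz : R }.

Definition vadd (a b : vec3) : vec3 := mkv (vx a + vx b) (vy a + vy b) (vz a + vz b).
Definition vscal (r : R) (a : vec3) : vec3 := mkv (r * vx a) (r * vy a) (r * vz a).
Definition dot (a b : vec3) : R := vx a * vx b + vy a * vy b + vz a * vz b.
Definition cross (a b : vec3) : vec3 :=
  mkv (vy a * vz b - vz a * vy b) (vz a * vx b - vx a * vz b) (vx a * vy b - vy a * vx b).
Definition vnorm (a : vec3) : R := sqrt (dot a a).

Definition dvec (f : R -> vec3) (s : R) : vec3 :=
  mkv (Derive (fun t => vx (f t)) s) (Derive (fun t => vy (f t)) s)
      (Derive (fun t => vz (f t)) s).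

Fixpoint dvec_n (n : nat) (f : R -> vec3) : R -> vec3 :=
  match n with O => f | S k => dvec (dvec_n k f) end.

Definition in_I (a b : Rbar) (s : R) : Prop := Rbar_lt a s /\ Rbar_lt s b.

Definition smooth_on (a b : Rbar) (f : R -> vec3) : Prop :=
  forall (n : nat) (s : R), in_I a b s ->
    ex_derive (fun t => vx (dvec_n n f t)) s /\
    ex_derive (fun t => vy (dvec_n n f t)) s /\
    ex_derive (fun t => vz (dvec_n n f t)) s.

Definition Tan (al : R -> vec3) (s : R) : vec3 := dvec al s.
Definition kappa (al : R -> vec3) (s : R) : R := vnorm (dvec_n 2 al s).
Definition Nrm (al : R -> vec3) (s : R) : vec3 := vscal (/ kappa al s) (dvec_n 2 al s).
Definition Bin (al : R -> vec3) (s : R) : vec3 := cross (Tan al s) (Nrm al s).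
(** torsion : N' = -kappa T + tau B *)
Definition tau (al : R -> vec3) (s : R) : R := dot (dvec (Nrm al) s) (Bin al s).

Definition ruled (al : R -> vec3) (s t : R) : vec3 := vadd (al s) (vscal t (Nrm al s)).

Inductive idx := i1 | i2.
Definition sum2 (f : idx -> R) : R := f i1 + f i2.

Definition pd (X : R -> R -> vec3) (i : idx) (u v : R) : vec3 :=
  match i with
  | i1 => dvec (fun u' => X u' v) u
  | i2 => dvec (fun v' => X u v') v
  end.

Definition dpart (i : idx) (f : R -> R -> R) (u v : R) : R :=
  match i with
  | i1 => Derive (fun u' => f u' v) u
  | i2 => Derive (fun v' => f u v') v
  end.

Definition gmet (X : R -> R -> vec3) (i j : idx) (u v : R) : R := dot (pd X i u v) (pd X j u v).
Definition detg (X : R -> R -> vec3) (u v : R) : R :=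
  gmet X i1 i1 u v * gmet X i2 i2 u v - gmet X i1 i2 u v * gmet X i2 i1 u v.
Definition ginv (X : R -> R -> vec3) (k l : idx) (u v : R) : R :=
  match k, l with
  | i1, i1 => gmet X i2 i2 u v / detg X u v
  | i2, i2 => gmet X i1 i1 u v / detg X u v
  | i1, i2 => - gmet X i1 i2 u v / detg X u v
  | i2, i1 => - gmet X i2 i1 u v / detg X u v
  end.

(** Christoffel symbols of the Levi-Civita connection: nabla_{d_i} d_j = Gamma^k_ij d_k *)
Definition Gamma (X : R -> R -> vec3) (k i j : idx) (u v : R) : R :=
  / 2 * sum2 (fun l => ginv X k l u v *
     (dpart i (gmet X j l) u v + dpart j (gmet X i l) u v - dpart l (gmet X i j) u v)).

(** Riemann tensor, R(d_i,d_j)d_k = Riem^l_{ijk} d_l, with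
    R(X,Y) = nabla_X nabla_Y - nabla_Y nabla_X - nabla_[X,Y] *)
Definition Riem (X : R -> R -> vec3) (l i j k : idx) (u v : R) : R :=
  dpart i (Gamma X l j k) u v - dpart j (Gamma X l i k) u v
  + sum2 (fun m => Gamma X m j k u v * Gamma X l i m u v - Gamma X m i k u v * Gamma X l j m u v).

(** * Curves in the surface, in coordinates c = (c^1, c^2), and vector fields
      along them given by their components V^k in the coordinate frame *)
Definition vfield := idx -> R -> R.

Definition ctangent (c : vfield) : vfield := fun i s => Derive (c i) s.

Definition covD (X : R -> R -> vec3) (c : vfield) (V : vfield) : vfield :=
  fun k s => Derive (V k) s +
    sum2 (fun i => sum2 (fun j =>
      Gamma X k i j (c i1 s) (c i2 s) * Derive (c i) s * V j s)).

Fixpoint covD_n (X : R -> R -> vec3) (c : vfield) (n : nat) (V : vfield) : vfield :=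
  match n with O => V | S m => covD X c (covD_n X c m V) end.

Definition Rcurv (X : R -> R -> vec3) (c : vfield) (A B C : vfield) : vfield :=
  fun l s => sum2 (fun i => sum2 (fun j => sum2 (fun k =>
    Riem X l i j k (c i1 s) (c i2 s) * A i s * B j s * C k s))).

Definition triharmonic_on (X : R -> R -> vec3) (c : vfield) (a b : Rbar) : Prop :=
  let T := ctangent c in
  forall s, in_I a b s -> forall l : idx,
    covD_n X c 5 T l s + Rcurv X c (covD_n X c 3 T) T T l s
    - Rcurv X c (covD_n X c 2 T) (covD_n X c 1 T) T l s = 0.

Definition amb (X : R -> R -> vec3) (c : vfield) (V : vfield) (s : R) : vec3 :=
  vadd (vscal (V i1 s) (pd X i1 (c i1 s) (c i2 s)))
       (vscal (V i2 s) (pd X i2 (c i1 s) (c i2 s))).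

(** unit normal of the surface; J w = nS x w is rotation by pi/2 in the tangent plane *)
Definition nS (X : R -> R -> vec3) (u v : R) : vec3 :=
  vscal (/ vnorm (cross (pd X i1 u v) (pd X i2 u v))) (cross (pd X i1 u v) (pd X i2 u v)).

Definition Jrot (X : R -> R -> vec3) (c : vfield) (w : vec3) (s : R) : vec3 :=
  cross (nS X (c i1 s) (c i2 s)) w.

(** the coordinate curve s |-> (s, 0), i.e. alpha inside S *)
Definition curve_s0 : vfield := fun i s => match i with i1 => s | i2 => 0 end.

From Stdlib Require Import Reals Lra ClassicalEpsilon.
From Coquelicot Require Import Coquelicot.
Open Scope R_scope.

(* Along the axis t = 0 of x(s,t) = alpha(s) + t N(s) the Frenet equations give the metric
   (1 - 2 t kappa + t^2 (kappa^2 + tau^2)) ds^2 + dt^2, whose coordinate frame is orthonormal on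
   the axis. So alpha has geodesic curvature kappa in S, the Gauss curvature of S along alpha is
   -tau^2, and the components of the triharmonic equation along T and J T are
     -10 kappa' kappa'' - 5 kappa kappa''' + 10 kappa^3 kappa'   and
     kappa'''' - 15 kappa kappa'^2 - 10 kappa^2 kappa'' + kappa^5 - tau^2 (kappa'' - 2 kappa^3).
   The second vanishes by hypothesis. The first is -(kappa/2) rho' - kappa' rho with
   rho = 10 kappa'' - 2 c1 / kappa^2 - 4 kappa^3. Differentiating the first integral gives
   kappa' rho = 0; where rho <> 0, kappa and hence rho are locally constant, so on the connected
   interval rho is either a nonzero constant, forcing kappa to be constant, or identically 0. *)

(** * Calculus on an open interval *)

Ltac eta_Derive :=
  repeat match goal with |- context [Derive (fun x => ?f x)] => change (fun x => f x) with f end.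

Lemma Derive_n_succ (f : R -> R) n : Derive (Derive_n f n) = Derive_n f (S n).
Proof. reflexivity. Qed.

Section Interval.

Variables a b : Rbar.

Lemma in_I_locally s : in_I a b s -> locally s (in_I a b).
Proof.
  intros [Has Hsb].
  exact (filter_and _ _ (open_Rbar_gt a s Has) (open_Rbar_lt b s Hsb)).
Qed.

Lemma in_I_between x y z : in_I a b x -> in_I a b z -> x <= y <= z -> in_I a b y.
Proof.
  intros [Hax _] [_ Hzb] [Hxy Hyz]; split.
  - apply Rbar_lt_le_trans with x; [exact Hax | exact Hxy].
  - apply Rbar_le_lt_trans with z; [exact Hyz | exact Hzb].
Qed.

Lemma locally_on_I (P : R -> Prop) s :
  (forall t, in_I a b t -> P t) -> in_I a b s -> locally s P.
Proof. intros HP Hs. exact (filter_imp _ _ HP (in_I_locally s Hs)). Qed.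

Lemma Derive_on_I f g s :
  (forall t, in_I a b t -> f t = g t) -> in_I a b s -> Derive f s = Derive g s.
Proof. intros Hfg Hs. apply Derive_ext_loc, (locally_on_I _ s Hfg Hs). Qed.

Lemma Derive_const_on_I f c s :
  (forall t, in_I a b t -> f t = c) -> in_I a b s -> Derive f s = 0.
Proof. intros Hf Hs. rewrite (Derive_on_I f (fun _ => c)); auto. apply Derive_const. Qed.

Lemma is_derive_0_const (f : R -> R) :
  (forall s, in_I a b s -> is_derive f s 0) ->
  forall x y, in_I a b x -> in_I a b y -> f x = f y.
Proof.
  intros Hf x y Hx Hy.
  assert (Hseg : forall t, Rmin x y <= t <= Rmax x y -> in_I a b t).
  { intros t Ht. unfold Rmin, Rmax in Ht.
    destruct (Rle_dec x y); [apply (in_I_between x t y) | apply (in_I_between y t x)]; auto. }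
  destruct (MVT_gen f x y (fun _ => 0)) as [c [_ Hc]].
  - intros t Ht. apply Hf, Hseg. lra.
  - intros t Ht. apply continuity_pt_filterlim.
    exact (ex_derive_continuous f t (ex_intro _ 0 (Hf t (Hseg t Ht)))).
  - lra.
Qed.

Lemma clopen_on_I (P : R -> Prop) :
  (forall x, in_I a b x -> P x -> locally x P) ->
  (forall x, in_I a b x -> ~ P x -> locally x (fun y => ~ P y)) ->
  forall x y, in_I a b x -> in_I a b y -> P x -> P y.
Proof.
  intros Hopen Hclosed x y Hx Hy Px.
  (* The indicator of P is locally constant, hence constant by the mean value theorem. *)
  set (chi t := if excluded_middle_informative (P t) then 1 else 0).
  assert (Hchi : forall t, in_I a b t -> is_derive chi t 0).
  { intros t Ht. apply (is_derive_ext_loc (fun _ => chi t)); [|exact (is_derive_const (chi t) t)].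
    unfold chi at 1; destruct (excluded_middle_informative (P t)) as [Pt | Pt].
    - apply (filter_imp P); [|exact (Hopen t Ht Pt)].
      intros u Pu. unfold chi. destruct (excluded_middle_informative (P u)); tauto.
    - apply (filter_imp (fun u => ~ P u)); [|exact (Hclosed t Ht Pt)].
      intros u Pu. unfold chi. destruct (excluded_middle_informative (P u)); tauto. }
  generalize (is_derive_0_const chi Hchi x y Hx Hy). unfold chi.
  destruct (excluded_middle_informative (P x)), (excluded_middle_informative (P y)); tauto || lra.
Qed.

Fixpoint Cn (n : nat) (f : R -> R) : Prop :=
  match n with
  | O => True
  | S m => (forall s, in_I a b s -> ex_derive f s) /\ Cn m (Derive f)
  end.

Lemma Cn_ex_derive n f s : Cn (S n) f -> in_I a b s -> ex_derive f s.
Proof. intros [Hf _]. apply Hf. Qed.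

Lemma Cn_Derive n f : Cn (S n) f -> Cn n (Derive f).
Proof. intros [_ Hf]. exact Hf. Qed.

Lemma Cn_Derive_n n j f : Cn (j + n) f -> Cn n (Derive_n f j).
Proof.
  revert n; induction j as [|j IH]; intros n Hf; [exact Hf|].
  apply Cn_Derive, IH. rewrite <- plus_n_Sm. exact Hf.
Qed.

Lemma Cn_S n f : Cn (S n) f -> Cn n f.
Proof.
  revert f; induction n as [|n IH]; intros f Hf; [exact I|].
  destruct Hf as [Hf [Hf' Hf'']]. split; [exact Hf | apply IH; split; assumption].
Qed.

Lemma Cn_ext n f g : (forall s, in_I a b s -> f s = g s) -> Cn n f -> Cn n g.
Proof.
  revert f g; induction n as [|n IH]; intros f g Hfg Hf; [exact I|].
  destruct Hf as [Hf Hf']. split.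
  - intros s Hs. apply (ex_derive_ext_loc f); [apply (locally_on_I _ s Hfg Hs) | auto].
  - apply (IH (Derive f)); [|exact Hf']. intros s Hs. apply (Derive_on_I _ _ s Hfg Hs).
Qed.

Lemma Cn_const n c : Cn n (fun _ => c).
Proof.
  revert c; induction n as [|n IH]; intros c; [exact I|]. split.
  - intros s _. apply ex_derive_const.
  - apply (Cn_ext n (fun _ => 0)); [|apply IH]. intros s _. symmetry. apply Derive_const.
Qed.

Lemma Cn_plus n f g : Cn n f -> Cn n g -> Cn n (fun s => f s + g s).
Proof.
  revert f g; induction n as [|n IH]; intros f g Hf Hg; [exact I|].
  destruct Hf as [Hf Hf'], Hg as [Hg Hg']. split.
  - intros s Hs. auto_derive. auto.
  - apply (Cn_ext n (fun s => Derive f s + Derive g s)); [|apply IH; assumption].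
    intros s Hs. symmetry. apply Derive_plus; auto.
Qed.

Lemma Cn_mult n f g : Cn n f -> Cn n g -> Cn n (fun s => f s * g s).
Proof.
  revert f g; induction n as [|n IH]; intros f g Hf Hg; [exact I|].
  split.
  - intros s Hs. auto_derive. repeat split; eapply Cn_ex_derive; eassumption.
  - apply (Cn_ext n (fun s => Derive f s * g s + f s * Derive g s)).
    + intros s Hs. symmetry. apply Derive_mult; eapply Cn_ex_derive; eassumption.
    + apply Cn_plus; apply IH; auto using Cn_Derive, Cn_S.
Qed.

Lemma Cn_inv n f : (forall s, in_I a b s -> f s <> 0) -> Cn n f -> Cn n (fun s => / f s).
Proof.
  revert f; induction n as [|n IH]; intros f Hf0 Hf; [exact I|].
  split.
  - intros s Hs. auto_derive. split; [apply (Cn_ex_derive n f) | split; [apply Hf0|]]; auto.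
  - apply (Cn_ext n (fun s => (-1 * Derive f s) * (/ f s * / f s))).
    + intros s Hs. rewrite Derive_inv; [field | apply (Cn_ex_derive n f) | apply Hf0]; auto.
    + apply Cn_mult; [apply Cn_mult; [apply Cn_const | apply Cn_Derive; exact Hf]|].
      apply Cn_mult; apply IH; auto using Cn_S.
Qed.

Lemma Cn_sqrt n f : (forall s, in_I a b s -> 0 < f s) -> Cn n f -> Cn n (fun s => sqrt (f s)).
Proof.
  revert f; induction n as [|n IH]; intros f Hf0 Hf; [exact I|].
  assert (Hd : forall s, in_I a b s -> is_derive (fun t => sqrt (f t)) s
                 (Derive f s * (/ 2 * / sqrt (f s)))).
  { intros s Hs. assert (0 < sqrt (f s)) by (apply sqrt_lt_R0; auto).
    replace (Derive f s * (/ 2 * / sqrt (f s))) with (Derive f s / (2 * sqrt (f s)))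
      by (field; lra).
    apply is_derive_sqrt; [apply Derive_correct, (Cn_ex_derive n f) | apply Hf0]; auto. }
  split.
  - intros s Hs. exists (Derive f s * (/ 2 * / sqrt (f s))). auto.
  - apply (Cn_ext n (fun s => Derive f s * (/ 2 * / sqrt (f s)))).
    + intros s Hs. symmetry. apply is_derive_unique; auto.
    + apply Cn_mult; [apply Cn_Derive; exact Hf|].
      apply Cn_mult; [apply Cn_const|].
      apply Cn_inv; [intros s Hs; apply Rgt_not_eq, sqrt_lt_R0; auto|].
      apply IH; auto using Cn_S.
Qed.

Lemma locally_in_I x (P : R -> Prop) :
  locally x P -> exists a' b' : Rbar, in_I a' b' x /\ forall y, in_I a' b' y -> P y.
Proof.
  intros [eps Heps]. exists (x - eps), (x + eps).
  assert (0 < eps) by apply cond_pos.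
  split; [split; simpl; lra|].
  intros y [Hy1 Hy2]; simpl in Hy1, Hy2. apply Heps.
  change (Rabs (y - x) < eps). apply Rabs_def1; lra.
Qed.

Lemma continuous_neq_locally (f : R -> R) x c :
  continuous f x -> f x <> c -> locally x (fun y => f y <> c).
Proof.
  intros Hf Hfx. apply (Hf (fun z => z <> c)).
  assert (Hd : 0 < Rabs (f x - c)) by (apply Rabs_pos_lt; lra).
  exists (mkposreal _ Hd). intros z Hz Hzc. subst z.
  change (Rabs (c - f x) < Rabs (f x - c)) in Hz. rewrite Rabs_minus_sym in Hz. lra.
Qed.

Lemma smooth_ex_derive_Derive_n f j s :
  (forall n, Cn n f) -> in_I a b s -> ex_derive (Derive_n f j) s.
Proof. intros Hf. apply (Cn_ex_derive 0), Cn_Derive_n, Hf. Qed.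

End Interval.

(* auto_derive writes the first derivative of f as [Derive f]; turning it into [Derive_n f 1]
   lets ring see every derivative of f as a single atom. *)
Ltac auto_derive_n f Hf Hs :=
  auto_derive; repeat split; eta_Derive; try change (Derive f) with (Derive_n f 1);
  rewrite ?Derive_n_succ;
  try first [exact (smooth_ex_derive_Derive_n _ _ f 0 _ Hf Hs)
            | exact (smooth_ex_derive_Derive_n _ _ f _ _ Hf Hs)].

Lemma dot_comm t n : dot t n = dot n t.
Proof. unfold dot; ring. Qed.

Lemma dot_vscal_r t r n : dot t (vscal r n) = r * dot t n.
Proof. unfold dot, vscal; simpl; ring. Qed.

Lemma dot_vscal_l r t n : dot (vscal r t) n = r * dot t n.
Proof. unfold dot, vscal; simpl; ring. Qed.

Lemma dot_vadd_vscal_l t m n v : dot (vadd t (vscal v m)) n = dot t n + v * dot m n.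
Proof. unfold dot, vadd, vscal; simpl; ring. Qed.

Lemma dot_vadd_vscal_self t m v :
  dot (vadd t (vscal v m)) (vadd t (vscal v m)) = dot t t + 2 * v * dot t m + v ^ 2 * dot m m.
Proof. unfold dot, vadd, vscal; simpl; ring. Qed.

Lemma dot_cross_sq t n m :
  dot m (cross t n) ^ 2 =
  dot t t * dot n n * dot m m + 2 * dot t n * dot n m * dot t m
  - dot t t * dot n m ^ 2 - dot n n * dot t m ^ 2 - dot m m * dot t n ^ 2.
Proof. destruct t, n, m; unfold dot, cross; simpl; ring. Qed.

Lemma dot_cross_cross t n : dot (cross t n) (cross t n) = dot t t * dot n n - dot t n ^ 2.
Proof. destruct t, n; unfold dot, cross; simpl; ring. Qed.

Lemma cross_cross_l t n m : cross (cross t n) m = vadd (vscal (dot t m) n) (vscal (- dot n m) t).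
Proof. destruct t, n, m; unfold vadd, vscal, dot, cross; simpl; f_equal; ring. Qed.

Section Orthonormal.

Variables t n : vec3.
Hypotheses (Htt : dot t t = 1) (Hnn : dot n n = 1) (Htn : dot t n = 0).

Lemma dot_orthonormal_expansion m :
  dot m m = dot m t ^ 2 + dot m n ^ 2 + dot m (cross t n) ^ 2.
Proof.
  rewrite dot_cross_sq, Htt, Hnn, Htn, (dot_comm n m), (dot_comm t m). ring.
Qed.

Lemma vnorm_cross_orthonormal : vnorm (cross t n) = 1.
Proof.
  unfold vnorm. rewrite dot_cross_cross, Htt, Hnn, Htn.
  replace (1 * 1 - 0 ^ 2) with 1 by ring. apply sqrt_1.
Qed.

Lemma cross_cross_orthonormal : cross (cross t n) t = n.
Proof.
  rewrite cross_cross_l, Htt, dot_comm, Htn.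
  destruct n, t; unfold vadd, vscal; simpl; f_equal; ring.
Qed.

End Orthonormal.

Definition vex_derive (f : R -> vec3) (s : R) : Prop :=
  ex_derive (fun t => vx (f t)) s /\ ex_derive (fun t => vy (f t)) s /\
  ex_derive (fun t => vz (f t)) s.

Lemma Derive_dot f g s : vex_derive f s -> vex_derive g s ->
  Derive (fun t => dot (f t) (g t)) s = dot (dvec f s) (g s) + dot (f s) (dvec g s).
Proof.
  intros (Hfx & Hfy & Hfz) (Hgx & Hgy & Hgz).
  set (fx t := vx (f t)) in *; set (fy t := vy (f t)) in *; set (fz t := vz (f t)) in *.
  set (gx t := vx (g t)) in *; set (gy t := vy (g t)) in *; set (gz t := vz (g t)) in *.
  change (fun t => dot (f t) (g t)) with (fun t => fx t * gx t + fy t * gy t + fz t * gz t).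
  apply is_derive_unique. auto_derive; [tauto|].
  unfold fx, fy, fz, gx, gy, gz, dot, dvec; cbv beta; simpl. ring.
Qed.

Lemma dvec_vadd_vscal f g v s : vex_derive f s -> vex_derive g s ->
  dvec (fun t => vadd (f t) (vscal v (g t))) s = vadd (dvec f s) (vscal v (dvec g s)).
Proof.
  intros (Hfx & Hfy & Hfz) (Hgx & Hgy & Hgz).
  assert (Hline : forall p q : R -> R, ex_derive p s -> ex_derive q s ->
            is_derive (fun t => p t + v * q t) s (Derive p s + v * Derive q s))
    by (intros p q Hp Hq; auto_derive; [tauto | rewrite !Rmult_1_l; reflexivity]).
  unfold dvec, vadd, vscal; simpl. f_equal; apply is_derive_unique, Hline; assumption.
Qed.

Lemma dvec_affine c w s : dvec (fun t => vadd c (vscal t w)) s = w.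
Proof.
  destruct w as [wx wy wz]. unfold dvec, vadd, vscal; simpl.
  f_equal; apply is_derive_unique; auto_derive; auto; ring.
Qed.

Section VectorCn.

Variables a b : Rbar.

Definition CnV (n : nat) (f : R -> vec3) : Prop :=
  Cn a b n (fun s => vx (f s)) /\ Cn a b n (fun s => vy (f s)) /\ Cn a b n (fun s => vz (f s)).

Lemma CnV_vex_derive n f s : CnV (S n) f -> in_I a b s -> vex_derive f s.
Proof. intros (Hx & Hy & Hz) Hs. repeat split; eapply Cn_ex_derive; eassumption. Qed.

Lemma CnV_dvec n f : CnV (S n) f -> CnV n (dvec f).
Proof. intros (Hx & Hy & Hz). repeat split; apply Cn_Derive; assumption. Qed.

Lemma Cn_dot n f g : CnV n f -> CnV n g -> Cn a b n (fun s => dot (f s) (g s)).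
Proof.
  intros (Hfx & Hfy & Hfz) (Hgx & Hgy & Hgz). unfold dot.
  repeat apply Cn_plus; apply Cn_mult; assumption.
Qed.

Lemma CnV_vscal n r f : Cn a b n r -> CnV n f -> CnV n (fun s => vscal (r s) (f s)).
Proof. intros Hr (Hx & Hy & Hz). repeat split; apply Cn_mult; assumption. Qed.

Lemma dot_const_Derive f g c s :
  CnV 1 f -> CnV 1 g -> (forall t, in_I a b t -> dot (f t) (g t) = c) -> in_I a b s ->
  dot (dvec f s) (g s) + dot (f s) (dvec g s) = 0.
Proof.
  intros Hf Hg Hc Hs.
  rewrite <- Derive_dot by (eapply CnV_vex_derive; eassumption).
  exact (Derive_const_on_I a b _ c s Hc Hs).
Qed.

End VectorCn.

(** * The Frenet frame and the ruled surface *)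

Section Frenet.

Variables (a b : Rbar) (al : R -> vec3).
Hypotheses (Hsmooth : smooth_on a b al)
  (Hunit : forall s, in_I a b s -> vnorm (dvec al s) = 1)
  (Hkappa : forall s, in_I a b s -> kappa al s <> 0).

Lemma CnV_dvec_n n k : CnV a b n (dvec_n k al).
Proof.
  revert k; induction n as [|n IH]; intros k; [repeat split|].
  destruct (IH (S k)) as (Hx & Hy & Hz).
  repeat split; auto; intros s Hs; apply (Hsmooth k s Hs).
Qed.

Lemma dot_Tan_Tan s : in_I a b s -> dot (Tan al s) (Tan al s) = 1.
Proof.
  intros Hs. assert (H1 := Hunit s Hs). unfold vnorm in H1. unfold Tan.
  assert (Hpos : 0 <= dot (dvec al s) (dvec al s)) by (unfold dot; nra).
  rewrite <- (sqrt_sqrt _ Hpos), H1. ring.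
Qed.

Lemma kappa_sq s : in_I a b s -> kappa al s ^ 2 = dot (dvec_n 2 al s) (dvec_n 2 al s).
Proof.
  intros Hs. unfold kappa, vnorm. rewrite pow2_sqrt; [reflexivity|].
  unfold dot; nra.
Qed.

Lemma kappa_pos s : in_I a b s -> 0 < kappa al s.
Proof.
  intros Hs. assert (Hk := Hkappa s Hs).
  assert (0 <= kappa al s) by apply sqrt_pos. lra.
Qed.

Lemma Cn_kappa n : Cn a b n (kappa al).
Proof.
  apply (Cn_sqrt a b n (fun s => dot (dvec_n 2 al s) (dvec_n 2 al s))).
  - intros s Hs. rewrite <- kappa_sq by exact Hs. generalize (kappa_pos s Hs). nra.
  - apply Cn_dot; apply CnV_dvec_n.
Qed.

Lemma CnV_Nrm n : CnV a b n (Nrm al).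
Proof.
  apply CnV_vscal; [|apply CnV_dvec_n].
  apply Cn_inv; [exact Hkappa | apply Cn_kappa].
Qed.

Lemma dot_Tan_dTan s : in_I a b s -> dot (Tan al s) (dvec_n 2 al s) = 0.
Proof.
  intros Hs.
  assert (H0 := dot_const_Derive a b (Tan al) (Tan al) 1 s
                  (CnV_dvec_n 1 1) (CnV_dvec_n 1 1) dot_Tan_Tan Hs).
  rewrite dot_comm in H0. change (dvec (Tan al) s) with (dvec_n 2 al s) in H0. lra.
Qed.

Lemma dot_dTan_Nrm s : in_I a b s -> dot (dvec_n 2 al s) (Nrm al s) = kappa al s.
Proof.
  intros Hs. unfold Nrm. rewrite dot_vscal_r, <- kappa_sq by exact Hs.
  field. apply Hkappa, Hs.
Qed.

Lemma dot_Tan_Nrm s : in_I a b s -> dot (Tan al s) (Nrm al s) = 0.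
Proof. intros Hs. unfold Nrm. rewrite dot_vscal_r, dot_Tan_dTan by exact Hs. ring. Qed.

Lemma dot_Nrm_Nrm s : in_I a b s -> dot (Nrm al s) (Nrm al s) = 1.
Proof.
  intros Hs. unfold Nrm at 1. rewrite dot_vscal_l, dot_dTan_Nrm by exact Hs.
  field. apply Hkappa, Hs.
Qed.

Lemma dot_Nrm_dNrm s : in_I a b s -> dot (Nrm al s) (dvec (Nrm al) s) = 0.
Proof.
  intros Hs.
  assert (H0 := dot_const_Derive a b (Nrm al) (Nrm al) 1 s
                  (CnV_Nrm 1) (CnV_Nrm 1) dot_Nrm_Nrm Hs).
  rewrite dot_comm in H0. lra.
Qed.

Lemma dot_Tan_dNrm s : in_I a b s -> dot (Tan al s) (dvec (Nrm al) s) = - kappa al s.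
Proof.
  intros Hs.
  assert (H0 := dot_const_Derive a b (Tan al) (Nrm al) 0 s
                  (CnV_dvec_n 1 1) (CnV_Nrm 1) dot_Tan_Nrm Hs).
  change (dvec (Tan al) s) with (dvec_n 2 al s) in H0.
  rewrite dot_dTan_Nrm in H0 by exact Hs. lra.
Qed.

Lemma dot_dNrm_dNrm s : in_I a b s ->
  dot (dvec (Nrm al) s) (dvec (Nrm al) s) = kappa al s ^ 2 + tau al s ^ 2.
Proof.
  intros Hs.
  rewrite (dot_orthonormal_expansion (Tan al s) (Nrm al s))
    by auto using dot_Tan_Tan, dot_Nrm_Nrm, dot_Tan_Nrm.
  rewrite (dot_comm _ (Tan al s)), dot_Tan_dNrm, (dot_comm _ (Nrm al s)), dot_Nrm_dNrm by exact Hs.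
  unfold tau, Bin. ring.
Qed.

Lemma pd_ruled_1 u v : in_I a b u ->
  pd (ruled al) i1 u v = vadd (Tan al u) (vscal v (dvec (Nrm al) u)).
Proof.
  intros Hu. apply dvec_vadd_vscal; eapply CnV_vex_derive; [apply (CnV_dvec_n 1 0) | exact Hu |
    apply (CnV_Nrm 1) | exact Hu].
Qed.

Lemma pd_ruled_2 u v : pd (ruled al) i2 u v = Nrm al u.
Proof. apply dvec_affine. Qed.

Lemma gmet_ruled_11 u v : in_I a b u ->
  gmet (ruled al) i1 i1 u v
  = 1 - 2 * v * kappa al u + v ^ 2 * dot (dvec (Nrm al) u) (dvec (Nrm al) u).
Proof.
  intros Hu. unfold gmet.
  rewrite pd_ruled_1, dot_vadd_vscal_self, dot_Tan_Tan, dot_Tan_dNrm by exact Hu. ring.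
Qed.

Lemma gmet_ruled_12 u v : in_I a b u -> gmet (ruled al) i1 i2 u v = 0.
Proof.
  intros Hu. unfold gmet. rewrite pd_ruled_1, pd_ruled_2, dot_vadd_vscal_l, dot_Tan_Nrm by exact Hu.
  rewrite dot_comm, dot_Nrm_dNrm by exact Hu. ring.
Qed.

Lemma gmet_ruled_22 u v : in_I a b u -> gmet (ruled al) i2 i2 u v = 1.
Proof. intros Hu. unfold gmet. rewrite pd_ruled_2. apply dot_Nrm_Nrm, Hu. Qed.

End Frenet.

(** * Surfaces with metric (1 - 2 v k(u) + v^2 q(u)) du^2 + dv^2 *)

Lemma gmet_sym X i j u v : gmet X i j u v = gmet X j i u v.
Proof. apply dot_comm. Qed.

Lemma Riem_antisym X l i j k u v : Riem X l i j k u v = - Riem X l j i k u v.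
Proof. unfold Riem, sum2. ring. Qed.

Lemma Riem_diag X l i k u v : Riem X l i i k u v = 0.
Proof. unfold Riem, sum2. ring. Qed.

Section AxisMetric.

Variables (a b : Rbar) (X : R -> R -> vec3) (k q : R -> R).
Hypotheses
  (Hg11 : forall u v, in_I a b u -> gmet X i1 i1 u v = 1 - 2 * v * k u + v ^ 2 * q u)
  (Hg12 : forall u v, in_I a b u -> gmet X i1 i2 u v = 0)
  (Hg22 : forall u v, in_I a b u -> gmet X i2 i2 u v = 1)
  (Hk : forall n, Cn a b n k)
  (Hq : forall s, in_I a b s -> ex_derive q s).

Lemma gmet_21 u v : in_I a b u -> gmet X i2 i1 u v = 0.
Proof. intros Hu. rewrite gmet_sym. apply Hg12, Hu. Qed.

Lemma gmet_11_axis u : in_I a b u -> gmet X i1 i1 u 0 = 1.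
Proof. intros Hu. rewrite Hg11 by exact Hu. ring. Qed.

Lemma dpart_const_on_I i (f : R -> R -> R) c u v :
  (forall u' v', in_I a b u' -> f u' v' = c) -> in_I a b u -> dpart i f u v = 0.
Proof.
  intros Hf Hu. destruct i; simpl.
  - apply (Derive_const_on_I a b _ c); auto.
  - rewrite (Derive_ext _ (fun _ => c)) by auto. apply Derive_const.
Qed.

Lemma dpart1_g11 u v : in_I a b u ->
  dpart i1 (gmet X i1 i1) u v = - 2 * v * Derive k u + v ^ 2 * Derive q u.
Proof.
  intros Hu. simpl.
  rewrite (Derive_on_I a b _ (fun u' => 1 - 2 * v * k u' + v ^ 2 * q u')) by auto.
  apply is_derive_unique. auto_derive_n k Hk Hu; [auto|ring].
Qed.

Lemma dpart2_g11 u v : in_I a b u ->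
  dpart i2 (gmet X i1 i1) u v = - 2 * k u + 2 * v * q u.
Proof.
  intros Hu. simpl.
  rewrite (Derive_ext _ (fun v' => 1 - 2 * v' * k u + v' ^ 2 * q u)) by auto.
  apply is_derive_unique. auto_derive; [auto|]. ring.
Qed.

Ltac metric_simpl Hu :=
  unfold Gamma, sum2, ginv, detg;
  rewrite ?(dpart1_g11 _ _ Hu), ?(dpart2_g11 _ _ Hu),
    ?(dpart_const_on_I _ (gmet X i1 i2) 0 _ _ (fun u' v' => Hg12 u' v') Hu),
    ?(dpart_const_on_I _ (gmet X i2 i1) 0 _ _ (fun u' v' => gmet_21 u' v') Hu),
    ?(dpart_const_on_I _ (gmet X i2 i2) 1 _ _ (fun u' v' => Hg22 u' v') Hu),
    ?(gmet_11_axis _ Hu), ?(Hg11 _ _ Hu), ?(Hg12 _ _ Hu), ?(gmet_21 _ _ Hu), ?(Hg22 _ _ Hu).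

Lemma Gamma_axis l i j u : in_I a b u ->
  Gamma X l i j u 0 =
  match l, i, j with
  | i1, i1, i2 | i1, i2, i1 => - k u
  | i2, i1, i1 => k u
  | _, _, _ => 0
  end.
Proof. intros Hu. destruct l, i, j; metric_simpl Hu; field. Qed.

(* These hold even where the metric degenerates ([/ 0 = 0] on both sides); differentiating them
   at [v = 0] only needs the denominator to be 1 there. *)
Lemma Gamma_111 u v : in_I a b u ->
  Gamma X i1 i1 i1 u v
  = (- v * Derive k u + v ^ 2 / 2 * Derive q u) * / (1 - 2 * v * k u + v ^ 2 * q u).
Proof.
  intros Hu. metric_simpl Hu.
  set (G := 1 - 2 * v * k u + v ^ 2 * q u). unfold Rdiv.
  rewrite Rmult_1_r, Rmult_0_l, Rminus_0_r. set (w := / G). field.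
Qed.

Lemma Gamma_211 u v : in_I a b u ->
  Gamma X i2 i1 i1 u v
  = (k u - v * q u) * ((1 - 2 * v * k u + v ^ 2 * q u) / (1 - 2 * v * k u + v ^ 2 * q u)).
Proof.
  intros Hu. metric_simpl Hu.
  set (G := 1 - 2 * v * k u + v ^ 2 * q u). unfold Rdiv.
  rewrite Rmult_1_r, Rmult_0_l, Rminus_0_r. set (w := / G). field.
Qed.

Lemma dpart2_Gamma_111_axis s : in_I a b s -> dpart i2 (Gamma X i1 i1 i1) s 0 = - Derive k s.
Proof.
  intros Hs. simpl. rewrite (Derive_ext _ _ _ (fun v => Gamma_111 s v Hs)).
  apply is_derive_unique. auto_derive; [repeat split; lra|]. field_simplify; [field|lra..].
Qed.

Lemma dpart2_Gamma_211_axis s : in_I a b s -> dpart i2 (Gamma X i2 i1 i1) s 0 = - q s.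
Proof.
  intros Hs. simpl. rewrite (Derive_ext _ _ _ (fun v => Gamma_211 s v Hs)).
  apply is_derive_unique. auto_derive; [repeat split; lra|]. field_simplify; [field|lra..].
Qed.

Lemma Riem_axis_1 s : in_I a b s -> Riem X i1 i2 i1 i1 s 0 = 0.
Proof.
  intros Hs. unfold Riem, sum2.
  rewrite dpart2_Gamma_111_axis by exact Hs. cbn [dpart].
  rewrite (Derive_on_I a b (fun u => Gamma X i1 i2 i1 u 0) (fun u => - k u))
    by first [exact Hs | intros t Ht; exact (Gamma_axis i1 i2 i1 t Ht)].
  rewrite !Gamma_axis by exact Hs.
  rewrite Derive_opp. ring.
Qed.

Lemma Riem_axis_2 s : in_I a b s -> Riem X i2 i2 i1 i1 s 0 = k s ^ 2 - q s.
Proof.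
  intros Hs. unfold Riem, sum2.
  rewrite dpart2_Gamma_211_axis by exact Hs. cbn [dpart].
  rewrite (Derive_const_on_I a b (fun u => Gamma X i2 i2 i1 u 0) 0)
    by first [exact Hs | intros t Ht; exact (Gamma_axis i2 i2 i1 t Ht)].
  rewrite !Gamma_axis by exact Hs. ring.
Qed.

Lemma ctangent_curve_s0 s : ctangent curve_s0 i1 s = 1 /\ ctangent curve_s0 i2 s = 0.
Proof. split; [apply (Derive_id s) | apply (Derive_const 0 s)]. Qed.

Lemma covD_axis V s : in_I a b s ->
  covD X curve_s0 V i1 s = Derive (V i1) s - k s * V i2 s /\
  covD X curve_s0 V i2 s = Derive (V i2) s + k s * V i1 s.
Proof.
  intros Hs. destruct (ctangent_curve_s0 s) as [T1 T2].
  unfold covD, sum2; cbn [curve_s0]. unfold ctangent in T1, T2.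
  rewrite T1, T2, !Gamma_axis by exact Hs. split; ring.
Qed.

Local Notation T := (ctangent curve_s0).

Lemma covD_n_tangent_succ n A B s A1 B1 :
  (forall t, in_I a b t -> covD_n X curve_s0 n T i1 t = A t /\ covD_n X curve_s0 n T i2 t = B t) ->
  in_I a b s -> is_derive A s (A1 + k s * B s) -> is_derive B s (B1 - k s * A s) ->
  covD_n X curve_s0 (S n) T i1 s = A1 /\ covD_n X curve_s0 (S n) T i2 s = B1.
Proof.
  intros HAB Hs HA HB. simpl. destruct (covD_axis (covD_n X curve_s0 n T) s Hs) as [-> ->].
  rewrite (Derive_on_I a b _ A s (fun t Ht => proj1 (HAB t Ht)) Hs),
    (Derive_on_I a b _ B s (fun t Ht => proj2 (HAB t Ht)) Hs),
    (is_derive_unique _ _ _ HA), (is_derive_unique _ _ _ HB).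
  destruct (HAB s Hs) as [-> ->]. split; ring.
Qed.

Lemma covD_n_tangent_1 s : in_I a b s ->
  covD_n X curve_s0 1 T i1 s = 0 /\ covD_n X curve_s0 1 T i2 s = k s.
Proof.
  intros Hs. apply (covD_n_tangent_succ 0 (fun _ => 1) (fun _ => 0));
    [|exact Hs | auto_derive_n k Hk Hs; ring..].
  intros t _. exact (ctangent_curve_s0 t).
Qed.

Lemma covD_n_tangent_2 s : in_I a b s ->
  covD_n X curve_s0 2 T i1 s = - k s ^ 2 /\ covD_n X curve_s0 2 T i2 s = Derive_n k 1 s.
Proof.
  intros Hs. apply (covD_n_tangent_succ 1 _ _ s _ _ covD_n_tangent_1 Hs);
    auto_derive_n k Hk Hs; ring.
Qed.

Lemma covD_n_tangent_3 s : in_I a b s ->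
  covD_n X curve_s0 3 T i1 s = - 3 * k s * Derive_n k 1 s /\
  covD_n X curve_s0 3 T i2 s = Derive_n k 2 s - k s ^ 3.
Proof.
  intros Hs. apply (covD_n_tangent_succ 2 _ _ s _ _ covD_n_tangent_2 Hs);
    auto_derive_n k Hk Hs; ring.
Qed.

Lemma covD_n_tangent_4 s : in_I a b s ->
  covD_n X curve_s0 4 T i1 s
  = - 3 * Derive_n k 1 s ^ 2 - 4 * k s * Derive_n k 2 s + k s ^ 4 /\
  covD_n X curve_s0 4 T i2 s = Derive_n k 3 s - 6 * k s ^ 2 * Derive_n k 1 s.
Proof.
  intros Hs. apply (covD_n_tangent_succ 3 _ _ s _ _ covD_n_tangent_3 Hs);
    auto_derive_n k Hk Hs; ring.
Qed.

Lemma covD_n_tangent_5 s : in_I a b s ->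
  covD_n X curve_s0 5 T i1 s
  = - 10 * Derive_n k 1 s * Derive_n k 2 s - 5 * k s * Derive_n k 3 s
    + 10 * k s ^ 3 * Derive_n k 1 s /\
  covD_n X curve_s0 5 T i2 s
  = Derive_n k 4 s - 15 * k s * Derive_n k 1 s ^ 2 - 10 * k s ^ 2 * Derive_n k 2 s + k s ^ 5.
Proof.
  intros Hs. apply (covD_n_tangent_succ 4 _ _ s _ _ covD_n_tangent_4 Hs);
    auto_derive_n k Hk Hs; ring.
Qed.

Lemma triharmonic_on_axis :
  (forall s, in_I a b s ->
     - 10 * Derive_n k 1 s * Derive_n k 2 s - 5 * k s * Derive_n k 3 s
     + 10 * k s ^ 3 * Derive_n k 1 s = 0) ->
  (forall s, in_I a b s ->
     Derive_n k 4 s - 15 * k s * Derive_n k 1 s ^ 2 - 10 * k s ^ 2 * Derive_n k 2 s + k s ^ 5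
     - (q s - k s ^ 2) * (Derive_n k 2 s - 2 * k s ^ 3) = 0) ->
  triharmonic_on X curve_s0 a b.
Proof.
  intros Htan Hnor s Hs l.
  destruct (ctangent_curve_s0 s) as [T1 T2].
  destruct (covD_n_tangent_1 s Hs) as [E11 E12], (covD_n_tangent_2 s Hs) as [E21 E22],
    (covD_n_tangent_3 s Hs) as [E31 E32], (covD_n_tangent_5 s Hs) as [E51 E52].
  unfold Rcurv, sum2; cbn [curve_s0].
  rewrite T1, T2, E11, E12, E21, E22, E31, E32, !Riem_diag, (Riem_antisym _ l i1 i2).
  destruct l.
  - rewrite E51, Riem_axis_1 by exact Hs. etransitivity; [|exact (Htan s Hs)]. ring.
  - rewrite E52, Riem_axis_2 by exact Hs. etransitivity; [|exact (Hnor s Hs)]. ring.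
Qed.

Lemma amb_covD_tangent s : in_I a b s ->
  amb X curve_s0 (covD X curve_s0 T) s = vscal (k s) (Jrot X curve_s0 (amb X curve_s0 T s) s).
Proof.
  intros Hs. destruct (ctangent_curve_s0 s) as [T1 T2], (covD_n_tangent_1 s Hs) as [E1 E2].
  change (covD_n X curve_s0 1 T) with (covD X curve_s0 T) in E1, E2.
  unfold amb, Jrot, nS; cbn [curve_s0] in *. rewrite T1, T2, E1, E2.
  assert (Htt : dot (pd X i1 s 0) (pd X i1 s 0) = 1) by exact (gmet_11_axis s Hs).
  assert (Hnn : dot (pd X i2 s 0) (pd X i2 s 0) = 1) by exact (Hg22 s 0 Hs).
  assert (Htn : dot (pd X i1 s 0) (pd X i2 s 0) = 0) by exact (Hg12 s 0 Hs).
  rewrite (vnorm_cross_orthonormal _ _ Htt Hnn Htn), Rinv_1.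
  rewrite <- (cross_cross_orthonormal _ _ Htt Hnn Htn) at 1.
  destruct (pd X i1 s 0), (pd X i2 s 0). unfold vadd, vscal, cross; simpl. f_equal; ring.
Qed.

End AxisMetric.

(** * The first integral of the curvature *)

Definition ode2_residual (c1 : R) (k : R -> R) (s : R) : R :=
  10 * Derive_n k 2 s - 2 * c1 / k s ^ 2 - 4 * k s ^ 3.

Section FirstIntegral.

Variables (a b : Rbar) (k : R -> R) (c1 c2 : R).
Hypotheses (Hk : forall n, Cn a b n k) (Hpos : forall s, in_I a b s -> 0 < k s)
  (Hfirst : forall s, in_I a b s -> 5 * Derive k s ^ 2 = c2 - 2 * c1 / k s + k s ^ 4).

Lemma Derive_mult_ode2_residual s : in_I a b s -> Derive k s * ode2_residual c1 k s = 0.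
Proof.
  intros Hs. assert (Hks := Hpos s Hs).
  rewrite <- (Derive_const_on_I a b
    (fun t => 5 * Derive k t ^ 2 - (c2 - 2 * c1 / k t + k t ^ 4)) 0 s)
    by (first [exact Hs | intros t Ht; rewrite (Hfirst t Ht); ring]).
  symmetry. apply is_derive_unique. auto_derive_n k Hk Hs; [lra|].
  unfold ode2_residual. field. lra.
Qed.

Lemma ex_derive_ode2_residual s : in_I a b s -> ex_derive (ode2_residual c1 k) s.
Proof. intros Hs. assert (Hks := Hpos s Hs). unfold ode2_residual. auto_derive_n k Hk Hs. nra. Qed.

Lemma is_derive_0_of_ode2_residual_neq_0 s :
  in_I a b s -> ode2_residual c1 k s <> 0 -> is_derive k s 0.
Proof.
  intros Hs Hr. replace 0 with (Derive k s).
  - apply Derive_correct, (smooth_ex_derive_Derive_n a b k 0 s Hk Hs).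
  - destruct (Rmult_integral _ _ (Derive_mult_ode2_residual s Hs)); tauto.
Qed.

Lemma ode2_residual_locally_const x : in_I a b x -> ode2_residual c1 k x <> 0 ->
  locally x (fun y => ode2_residual c1 k y = ode2_residual c1 k x).
Proof.
  intros Hx Hrx. set (r := ode2_residual c1 k) in *.
  assert (Hcont : continuous r x)
    by exact (ex_derive_continuous r x (ex_derive_ode2_residual x Hx)).
  destruct (locally_in_I x _ (filter_and _ _ (in_I_locally a b x Hx)
              (continuous_neq_locally r x 0 Hcont Hrx))) as (a' & b' & Hx' & HJ).
  assert (Hk1 : forall y, in_I a' b' y -> is_derive k y 0)
    by (intros y Hy; destruct (HJ y Hy); apply is_derive_0_of_ode2_residual_neq_0; assumption).
  assert (Hk2 : forall y, in_I a' b' y -> Derive_n k 2 y = 0).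
  { intros y Hy. apply (Derive_const_on_I a' b' (Derive_n k 1) 0 y); [|exact Hy].
    intros t Ht. exact (is_derive_unique _ _ _ (Hk1 t Ht)). }
  apply (locally_on_I a' b' _ x); [|exact Hx'].
  intros y Hy. unfold r, ode2_residual.
  rewrite (Hk2 y Hy), (Hk2 x Hx'), (is_derive_0_const a' b' k Hk1 y x Hy Hx'). ring.
Qed.

Hypothesis Hnonconst : exists s1 s2, in_I a b s1 /\ in_I a b s2 /\ k s1 <> k s2.

Lemma ode2_residual_eq_0 s : in_I a b s -> ode2_residual c1 k s = 0.
Proof.
  intros Hs. set (r := ode2_residual c1 k).
  destruct (Req_dec (r s) 0) as [|Hr0]; [assumption|exfalso].
  assert (Hr : forall y, in_I a b y -> r y = r s).
  { intros y Hy. refine (clopen_on_I a b (fun y => r y = r s) _ _ s y Hs Hy eq_refl).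
    - intros x Hx Px. rewrite <- Px. apply ode2_residual_locally_const; [exact Hx|].
      fold r. congruence.
    - intros x Hx Px. apply continuous_neq_locally; [|exact Px].
      exact (ex_derive_continuous r x (ex_derive_ode2_residual x Hx)). }
  destruct Hnonconst as (s1 & s2 & Hs1 & Hs2 & Hne). apply Hne.
  apply (is_derive_0_const a b k); [|assumption..].
  intros t Ht. apply is_derive_0_of_ode2_residual_neq_0; [exact Ht|].
  fold r. rewrite (Hr t Ht). exact Hr0.
Qed.

Lemma tangential_eq_of_first_integral s : in_I a b s ->
  - 10 * Derive_n k 1 s * Derive_n k 2 s - 5 * k s * Derive_n k 3 s
  + 10 * k s ^ 3 * Derive_n k 1 s = 0.
Proof.
  intros Hs. assert (Hks := Hpos s Hs).
  assert (Hr' : Derive (ode2_residual c1 k) s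
                = 10 * Derive_n k 3 s + 4 * c1 * Derive_n k 1 s / k s ^ 3
                  - 12 * k s ^ 2 * Derive_n k 1 s).
  { apply is_derive_unique. unfold ode2_residual. auto_derive_n k Hk Hs; [nra|]. field. lra. }
  rewrite (Derive_const_on_I a b _ 0 s ode2_residual_eq_0 Hs) in Hr'.
  assert (Hr := ode2_residual_eq_0 s Hs). unfold ode2_residual in Hr.
  transitivity (- (k s / 2) * (10 * Derive_n k 3 s + 4 * c1 * Derive_n k 1 s / k s ^ 3
                               - 12 * k s ^ 2 * Derive_n k 1 s)
                - Derive_n k 1 s * (10 * Derive_n k 2 s - 2 * c1 / k s ^ 2 - 4 * k s ^ 3)).
  - field. lra.
  - rewrite <- Hr', Hr. ring.
Qed.

End FirstIntegral.

Theorem proposition3p2 (al : R -> vec3) (a b : Rbar) :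
  smooth_on a b al ->
  (forall s, in_I a b s -> vnorm (dvec al s) = 1) ->
  (forall s, in_I a b s -> kappa al s <> 0) ->
  (exists s1 s2, in_I a b s1 /\ in_I a b s2 /\ kappa al s1 <> kappa al s2) ->
  (exists c1 c2 : R, forall s, in_I a b s ->
     5 * (Derive (kappa al) s) ^ 2 = c2 - 2 * c1 / kappa al s + kappa al s ^ 4) ->
  (exists s1 s2, in_I a b s1 /\ in_I a b s2 /\ tau al s1 <> tau al s2) ->
  (forall s, in_I a b s ->
     Derive_n (kappa al) 4 s - 15 * kappa al s * (Derive (kappa al) s) ^ 2
     - 10 * kappa al s ^ 2 * Derive_n (kappa al) 2 s + kappa al s ^ 5
     - tau al s ^ 2 * (Derive_n (kappa al) 2 s - 2 * kappa al s ^ 3) = 0) ->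
  triharmonic_on (ruled al) curve_s0 a b /\
  exists kg : R -> R,
    (forall s, in_I a b s ->
       amb (ruled al) curve_s0 (covD (ruled al) curve_s0 (ctangent curve_s0)) s
       = vscal (kg s) (Jrot (ruled al) curve_s0 (amb (ruled al) curve_s0 (ctangent curve_s0) s) s)) /\
    (forall s, in_I a b s -> kg s = kappa al s) /\
    (exists s1 s2, in_I a b s1 /\ in_I a b s2 /\ kg s1 <> kg s2).
Proof.
  intros Hsmooth Hunit Hkappa Hnonconst [c1 [c2 Hfirst]] _ Hnormal.
  set (q u := dot (dvec (Nrm al) u) (dvec (Nrm al) u)).
  assert (Hq : forall s, in_I a b s -> ex_derive q s).
  { intros s Hs. apply (Cn_ex_derive a b 0 _ s); [|exact Hs].
    apply Cn_dot; apply CnV_dvec, CnV_Nrm; assumption. }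
  pose proof (Cn_kappa a b al Hsmooth Hkappa) as Hk.
  pose proof (gmet_ruled_11 a b al Hsmooth Hunit Hkappa) as Hg11.
  pose proof (gmet_ruled_12 a b al Hsmooth Hunit Hkappa) as Hg12.
  pose proof (gmet_ruled_22 a b al Hkappa) as Hg22.
  split.
  - apply (triharmonic_on_axis a b (ruled al) (kappa al) q Hg11 Hg12 Hg22 Hk Hq).
    + exact (tangential_eq_of_first_integral a b _ c1 c2 Hk (kappa_pos a b al Hkappa)
               Hfirst Hnonconst).
    + intros s Hs. unfold q. rewrite (dot_dNrm_dNrm a b al Hsmooth Hunit Hkappa s Hs).
      change (Derive_n (kappa al) 1) with (Derive (kappa al)).
      etransitivity; [|exact (Hnormal s Hs)]. ring.
  - exists (kappa al). repeat split; auto.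
    exact (amb_covD_tangent a b (ruled al) (kappa al) q Hg11 Hg12 Hg22 Hk Hq).
Qed.
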